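(* The functors $T\circ\mathbf F_{\mathcal{WHB}}$ and $\mathbf F_{\mathcal{TBA}}$ from $\mathsf{Set}$ to $\mathsf{TBA}$ are naturally isomorphic.
   Context: A WHB-algebra is an algebra $(A,\wedge,\vee,\to,\leftarrow,0,1)$ such that $(A,\wedge,\vee,0,1)$ is a bounded distributive lattice and for all $a,b,c\in A$: $a\to a=1$; $a\to(b\wedge c)=(a\to b)\wedge(a\to c)$; $(a\vee b)\to c=(a\to c)\wedge(b\to c)$; $(a\to b)\wedge(b\to c)\le a\to c$; $a\leftarrow a=0$; $(a\vee b)\leftarrow c=(a\leftarrow c)\vee(b\leftarrow c)$; $a\leftarrow(b\wedge c)=(a\leftarrow b)\vee(a\leftarrow c)$; $a\leftarrow c\le(a\leftarrow b)\vee(b\leftarrow c)$; $a\wedge((a\to b)\leftarrow 0)\le b$; $a\le b\vee(1\to(a\leftarrow b))$. A tense algebra is $(\mathbf B,G,H)$ with $\mathbf B$ a Boolean algebra and unary $G,H$ such that, with $P(x)=\neg H(\neg x)$, $F(x)=\neg G(\neg x)$: $P(x)\le y\iff x\le G(y)$ and $F(x)\le y\iff x\le H(y)$; $\mathsf{TBA}$ is the category of tense algebras and homomorphisms, $\mathsf{WHB}$ that of WHB-algebras. For a variety $\mathcal V$, $\mathbf F_{\mathcal V}\colon\mathsf{Set}\to\mathcal V$ is the free-algebra functor: $\mathbf F_{\mathcal V}(X)$ is the $\mathcal V$-free algebra over $X$ and, for $l\colon X\to Y$, $\mathbf F_{\mathcal V}(l)$ is the unique homomorphism extending $x\mapsto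 l(x)$. For a WHB-algebra $\mathbf A$: $X(\mathbf A)$ is its set of prime filters, $\sigma_{\mathbf A}(a)=\{P\colon a\in P\}$, $\tau_{\mathbf A}$ the topology with subbase $\{\sigma_{\mathbf A}(a)\}\cup\{X(\mathbf A)\setminus\sigma_{\mathbf A}(a)\}$; $(P,Q)\in R_{\mathbf A}$ iff for all $a,b$ ($a\to b\in P$, $a\in Q$ imply $b\in Q$); $(P,Q)\in S_{\mathbf A}$ iff for all $a,b$ ($a\in Q$, $b\notin Q$ imply $a\leftarrow b\in P$). $T(\mathbf A)$ is the Boolean algebra of $\tau_{\mathbf A}$-clopen subsets of $X(\mathbf A)$ with $G_{\mathbf A}(U)=\{P\colon R_{\mathbf A}(P)\subseteq U\}$ and $H_{\mathbf A}(U)=\{P\colon S_{\mathbf A}(P)\subseteq U\}$ (where $\mathcal R(P)=\{Q\colon(P,Q)\in\mathcal R\}$); for a homomorphism $h\colon\mathbf A\to\mathbf B$, $T(h)(U)=\{Q\in X(\mathbf B)\colon h^{-1}(Q)\in U\}$. *)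

From Stdlib Require Import List.
Import ListNotations.
Set Implicit Arguments.

Record bdl_axioms (A : Type) (meet join : A -> A -> A) (z o : A) : Prop := {
  meetC : forall a b, meet a b = meet b a;
  joinC : forall a b, join a b = join b a;
  meetA : forall a b c, meet a (meet b c) = meet (meet a b) c;
  joinA : forall a b c, join a (join b c) = join (join a b) c;
  meet_absorb : forall a b, meet a (join a b) = a;
  join_absorb : forall a b, join a (meet a b) = a;
  meet_distr : forall a b c, meet a (join b c) = join (meet a b) (meet a c);
  join0 : forall a, join a z = a;
  meet1 : forall a, meet a o = a
}.

Record WHB := {
  wcar :> Type;
  wmeet : wcar -> wcar -> wcar;
  wjoin : wcar -> wcar -> wcar;
  wimp : wcar -> wcar -> wcar;
  wcoimp : wcar -> wcar -> wcar;
  w0 : wcar;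
  w1 : wcar
}.

Definition wle {A : WHB} (a b : A) : Prop := wmeet A a b = a.

Record whb_axioms (A : WHB) : Prop := {
  whb_bdl : bdl_axioms (wmeet A) (wjoin A) (w0 A) (w1 A);
  whb_imp_refl : forall a : A, wimp A a a = w1 A;
  whb_imp_meet : forall a b c : A,
      wimp A a (wmeet A b c) = wmeet A (wimp A a b) (wimp A a c);
  whb_imp_join : forall a b c : A,
      wimp A (wjoin A a b) c = wmeet A (wimp A a c) (wimp A b c);
  whb_imp_trans : forall a b c : A,
      wle (A:=A) (wmeet A (wimp A a b) (wimp A b c)) (wimp A a c);
  whb_coimp_refl : forall a : A, wcoimp A a a = w0 A;
  whb_coimp_join : forall a b c : A,
      wcoimp A (wjoin A a b) c = wjoin A (wcoimp A a c) (wcoimp A b c);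
  whb_coimp_meet : forall a b c : A,
      wcoimp A a (wmeet A b c) = wjoin A (wcoimp A a b) (wcoimp A a c);
  whb_coimp_trans : forall a b c : A,
      wle (A:=A) (wcoimp A a c) (wjoin A (wcoimp A a b) (wcoimp A b c));
  whb_ax9 : forall a b : A, wle (A:=A) (wmeet A a (wcoimp A (wimp A a b) (w0 A))) b;
  whb_ax10 : forall a b : A, wle (A:=A) a (wjoin A b (wimp A (w1 A) (wcoimp A a b)))
}.

Definition whb_hom {A B : WHB} (f : A -> B) : Prop :=
  (forall a b, f (wmeet A a b) = wmeet B (f a) (f b)) /\
  (forall a b, f (wjoin A a b) = wjoin B (f a) (f b)) /\
  (forall a b, f (wimp A a b) = wimp B (f a) (f b)) /\
  (forall a b, f (wcoimp A a b) = wcoimp B (f a) (f b)) /\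
  f (w0 A) = w0 B /\ f (w1 A) = w1 B.

Definition is_free_whb {X : Type} {A : WHB} (i : X -> A) : Prop :=
  whb_axioms A /\
  forall (B : WHB), whb_axioms B -> forall f : X -> B,
    (exists h : A -> B, whb_hom h /\ forall x, h (i x) = f x) /\
    (forall h1 h2 : A -> B, whb_hom h1 -> whb_hom h2 ->
       (forall x, h1 (i x) = f x) -> (forall x, h2 (i x) = f x) ->
       forall a, h1 a = h2 a).

Record TBA := {
  tcar :> Type;
  tmeet : tcar -> tcar -> tcar;
  tjoin : tcar -> tcar -> tcar;
  tneg : tcar -> tcar;
  t0 : tcar;
  t1 : tcar;
  tG : tcar -> tcar;
  tH : tcar -> tcar
}.

Definition tle {B : TBA} (a b : B) : Prop := tmeet B a b = a.
Definition tP {B : TBA} (x : B) : B := tneg B (tH B (tneg B x)).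
Definition tF {B : TBA} (x : B) : B := tneg B (tG B (tneg B x)).

Record tba_axioms (B : TBA) : Prop := {
  tba_bdl : bdl_axioms (tmeet B) (tjoin B) (t0 B) (t1 B);
  tba_compl_meet : forall a : B, tmeet B a (tneg B a) = t0 B;
  tba_compl_join : forall a : B, tjoin B a (tneg B a) = t1 B;
  tba_PG : forall x y : B, tle (B:=B) (tP x) y <-> tle (B:=B) x (tG B y);
  tba_FH : forall x y : B, tle (B:=B) (tF x) y <-> tle (B:=B) x (tH B y)
}.

Definition tba_hom {A B : TBA} (f : A -> B) : Prop :=
  (forall a b, f (tmeet A a b) = tmeet B (f a) (f b)) /\
  (forall a b, f (tjoin A a b) = tjoin B (f a) (f b)) /\
  (forall a, f (tneg A a) = tneg B (f a)) /\
  f (t0 A) = t0 B /\ f (t1 A) = t1 B /\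
  (forall a, f (tG A a) = tG B (f a)) /\
  (forall a, f (tH A a) = tH B (f a)).

Definition is_free_tba {X : Type} {A : TBA} (i : X -> A) : Prop :=
  tba_axioms A /\
  forall (B : TBA), tba_axioms B -> forall f : X -> B,
    (exists h : A -> B, tba_hom h /\ forall x, h (i x) = f x) /\
    (forall h1 h2 : A -> B, tba_hom h1 -> tba_hom h2 ->
       (forall x, h1 (i x) = f x) -> (forall x, h2 (i x) = f x) ->
       forall a, h1 a = h2 a).

(* A subset of A is a predicate; subsets of X(A) are predicates on subsets
   of A, only their values on prime filters matter. *)
Definition pset (A : WHB) := (A -> Prop) -> Prop.

Definition prime_filter {A : WHB} (P : A -> Prop) : Prop :=
  P (w1 A) /\ ~ P (w0 A) /\
  (forall a b, P a -> P b -> P (wmeet A a b)) /\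
  (forall a b, P a -> wle a b -> P b) /\
  (forall a b, P (wjoin A a b) -> P a \/ P b).

Definition sigma {A : WHB} (a : A) : pset A := fun P => P a.

(* subbase element: (true, a) ~ sigma(a); (false, a) ~ X(A) \ sigma(a) *)
Definition subbasic {A : WHB} (p : bool * A) : pset A :=
  fun P => if fst p then P (snd p) else ~ P (snd p).

Definition t_open {A : WHB} (U : pset A) : Prop :=
  forall P, prime_filter P -> U P ->
    exists l : list (bool * A),
      Forall (fun p => subbasic p P) l /\
      forall Q, prime_filter Q -> Forall (fun p => subbasic p Q) l -> U Q.

Definition t_closed {A : WHB} (U : pset A) : Prop :=
  t_open (fun P => ~ U P).

Definition clopen {A : WHB} (U : pset A) : Prop := t_open U /\ t_closed U.

Definition pseteq {A : WHB} (U V : pset A) : Prop :=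
  forall P, prime_filter P -> (U P <-> V P).

Definition relR {A : WHB} (P Q : A -> Prop) : Prop :=
  forall a b, P (wimp A a b) -> Q a -> Q b.
Definition relS {A : WHB} (P Q : A -> Prop) : Prop :=
  forall a b, Q a -> ~ Q b -> P (wcoimp A a b).

Definition G_op {A : WHB} (U : pset A) : pset A :=
  fun P => forall Q, prime_filter Q -> relR P Q -> U Q.
Definition H_op {A : WHB} (U : pset A) : pset A :=
  fun P => forall Q, prime_filter Q -> relS P Q -> U Q.

Definition T_map {A B : WHB} (h : A -> B) (U : pset A) : pset B :=
  fun Q => U (fun a => Q (h a)).

Definition iso_onto_T {A : WHB} {B : TBA} (theta : B -> pset A) : Prop :=
  (forall b, clopen (theta b)) /\
  (forall b c, pseteq (theta (tmeet B b c)) (fun P => theta b P /\ theta c P)) /\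
  (forall b c, pseteq (theta (tjoin B b c)) (fun P => theta b P \/ theta c P)) /\
  (forall b, pseteq (theta (tneg B b)) (fun P => ~ theta b P)) /\
  pseteq (theta (t0 B)) (fun _ => False) /\
  pseteq (theta (t1 B)) (fun _ => True) /\
  (forall b, pseteq (theta (tG B b)) (G_op (theta b))) /\
  (forall b, pseteq (theta (tH B b)) (H_op (theta b))) /\
  (forall b c, pseteq (theta b) (theta c) -> b = c) /\
  (forall U, clopen U -> exists b, pseteq (theta b) U).

(* The prime filters of a WHB-algebra A separate its elements, and enough of
   them exist relative to R_A and S_A: by Zorn's lemma applied to filters
   closed under an entailment relation, G_A sends {P | a notin P or c in P} to
   sigma(a -> c), H_A sends it to the complement of sigma(a <- c), and S_A is
   the converse of R_A.  By compactness of the patch topology the clopen sets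
   are the finite unions of boxes sigma(a) \ sigma(c), so T(A) is a tense
   algebra and sigma embeds A into it, reading a -> c as G(~a \/ c) and
   a <- c as ~H(~a \/ c).
   For free algebras A = F_WHB(X) and C = F_TBA(X), freeness yields theta :
   C -> T(A) extending sigma on the generators and eta : A -> C.  Every box
   union U is represented by the element of C lying in exactly those prime
   filters V with eta^-1(V) in U; this representation is a tense homomorphism
   T(A) -> C inverse to theta, and naturality in X holds because everything is
   determined by the generators. *)

From Stdlib Require Import List Classical FunctionalExtensionality PropExtensionality.
From Stdlib Require Import ProofIrrelevance ClassicalEpsilon.
From mathcomp Require classical_sets.
Import ListNotations.
Set Implicit Arguments.

Lemma set_ext (T : Type) (X Y : T -> Prop) : (forall t, X t <-> Y t) -> X = Y.
Proof.
  intro H. apply functional_extensionality; intro t. apply propositional_extensionality, H.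
Qed.

Lemma zorn_above (T : Type) (P : (T -> Prop) -> Prop) (S0 : T -> Prop) :
  P S0 ->
  (forall F : (T -> Prop) -> Prop, (exists X, F X) -> (forall X, F X -> P X) ->
     (forall X Y, F X -> F Y -> (forall t, X t -> Y t) \/ (forall t, Y t -> X t)) ->
     P (fun t => exists2 X, F X & X t)) ->
  exists M, (forall t, S0 t -> M t) /\ P M /\
    forall B, (forall t, M t -> B t) -> P B -> forall t, B t -> M t.
Proof.
  intros PS0 Pchain.
  set (with0 := fun (X : T -> Prop) t => X t \/ S0 t).
  destruct (@classical_sets.Zorn_bigcup T (fun X => P (with0 X))) as [M [PM maxM]].
  - intros F FP Ftot.
    destruct (classic (exists X, F X)) as [[X0 FX0] | Fempty].
    + set (F' := fun Y => exists2 X, F X & Y = with0 X).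
      replace (with0 _) with (fun t => exists2 Y, F' Y & Y t).
      * apply Pchain.
        -- exists (with0 X0), X0; auto.
        -- intros Y [X FX ->]. exact (FP X FX).
        -- intros Y Y' [X FX ->] [X' FX' ->]. unfold with0.
           destruct (Ftot X X' FX FX') as [XX' | X'X]; [left | right];
             intros t [Ht | Ht]; auto.
      * apply set_ext; intro t. unfold F', with0. split.
        -- intros [Y [X FX ->] [Xt | S0t]]; [left; exists X |]; auto.
        -- intros [[X FX Xt] | S0t]; [exists (with0 X) | exists (with0 X0)];
             unfold with0; eauto.
    + replace (with0 _) with S0; [exact PS0 |].
      apply set_ext; intro t. unfold with0. split; [auto |].
      intros [[X FX _] | S0t]; [exfalso; eauto | exact S0t].
  - exists (with0 M). split; [unfold with0; auto | split; [exact PM |]].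
    intros B MB PB t Bt.
    assert (HB : with0 B = B).
    { apply set_ext; intro s. unfold with0. split; [| now left].
      intros [Bs | S0s]; [exact Bs | apply MB; now right]. }
    apply NNPP; intro nMt. apply (maxM B); [| rewrite HB; exact PB].
    split; [intros s Ms; apply MB; left; exact Ms |].
    intro BM. apply nMt. left. apply BM, Bt.
Qed.

Fixpoint boxes (T : Type) (L : list (T * T)) (P : T -> Prop) : Prop :=
  match L with
  | [] => False
  | p :: L' => (P (fst p) /\ ~ P (snd p)) \/ boxes L' P
  end.

Fixpoint coboxes (T : Type) (L : list (T * T)) (P : T -> Prop) : Prop :=
  match L with
  | [] => True
  | p :: L' => (~ P (fst p) \/ P (snd p)) /\ coboxes L' P
  end.

Lemma boxes_not_coboxes (T : Type) (L : list (T * T)) P : boxes L P <-> ~ coboxes L P.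
Proof.
  induction L as [| p L IH]; simpl; [tauto |].
  rewrite IH. destruct (classic (P (fst p))); tauto.
Qed.

Lemma boxes_In (T : Type) (L : list (T * T)) P :
  boxes L P <-> exists p, In p L /\ P (fst p) /\ ~ P (snd p).
Proof.
  induction L as [| q L IH]; simpl; [firstorder |]. rewrite IH. split.
  - intros [Hq | [p [inp Hp]]]; [exists q | exists p]; auto.
  - intros [p [[<- | inp] Hp]]; [left | right; exists p]; auto.
Qed.

Lemma boxes_map (T U : Type) (g : T -> U) L Q :
  boxes L (fun a => Q (g a)) <-> boxes (map (fun p => (g (fst p), g (snd p))) L) Q.
Proof. induction L as [| p L IH]; simpl; [tauto | rewrite IH; tauto]. Qed.

Lemma boxes_app (T : Type) (L M : list (T * T)) P :
  boxes (L ++ M) P <-> boxes L P \/ boxes M P.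
Proof. induction L as [| p L IH]; simpl; [tauto | rewrite IH; tauto]. Qed.

(** * Prime filters of bounded distributive lattices *)

Section BoundedDistributiveLattice.
Variables (T : Type) (meet join : T -> T -> T) (bot top : T).
Hypothesis L : bdl_axioms meet join bot top.

Definition lat_le a b := meet a b = a.

Definition lat_prime_filter (P : T -> Prop) : Prop :=
  P top /\ ~ P bot /\ (forall a b, P a -> P b -> P (meet a b)) /\
  (forall a b, P a -> lat_le a b -> P b) /\ (forall a b, P (join a b) -> P a \/ P b).

Lemma meet_idem a : meet a a = a.
Proof.
  transitivity (meet a (join a (meet a a))).
  - f_equal. symmetry. apply (join_absorb L).
  - apply (meet_absorb L).
Qed.

Lemma lat_le_refl a : lat_le a a.
Proof. apply meet_idem. Qed.

Lemma lat_le_trans a b c : lat_le a b -> lat_le b c -> lat_le a c.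
Proof. unfold lat_le. intros ab bc. rewrite <- ab, <- (meetA L), bc. reflexivity. Qed.

Lemma lat_le_antisym a b : lat_le a b -> lat_le b a -> a = b.
Proof. unfold lat_le. intros ab ba. rewrite <- ab, (meetC L). exact ba. Qed.

Lemma lat_le_meet_l a b : lat_le (meet a b) a.
Proof. unfold lat_le. rewrite (meetC L a b), <- (meetA L), meet_idem. reflexivity. Qed.

Lemma lat_le_meet_r a b : lat_le (meet a b) b.
Proof. unfold lat_le. rewrite <- (meetA L), meet_idem. reflexivity. Qed.

Lemma lat_le_meet a b c : lat_le c a -> lat_le c b -> lat_le c (meet a b).
Proof. unfold lat_le. intros ca cb. rewrite (meetA L), ca, cb. reflexivity. Qed.

Lemma lat_le_joinE a b : lat_le a b <-> join a b = b.
Proof.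
  unfold lat_le. split; intro H.
  - rewrite <- H, (joinC L), (meetC L). apply (join_absorb L).
  - rewrite <- H. apply (meet_absorb L).
Qed.

Lemma lat_le_join_l a b : lat_le a (join a b).
Proof. apply (meet_absorb L). Qed.

Lemma lat_le_join_r a b : lat_le b (join a b).
Proof. rewrite (joinC L). apply lat_le_join_l. Qed.

Lemma lat_le_join a b c : lat_le a c -> lat_le b c -> lat_le (join a b) c.
Proof.
  rewrite !lat_le_joinE. intros ac bc. rewrite <- (joinA L), bc, ac. reflexivity.
Qed.

Lemma lat_le_bot a : lat_le bot a.
Proof.
  unfold lat_le. transitivity (meet bot (join bot a)).
  - rewrite (joinC L), (join0 L). reflexivity.
  - apply (meet_absorb L).
Qed.

Lemma lat_le_top a : lat_le a top.
Proof. apply (meet1 L). Qed.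

Section PrimeFilter.
Variable P : T -> Prop.
Hypothesis HP : lat_prime_filter P.

Lemma prime_top : P top. Proof. apply HP. Qed.
Lemma prime_bot : ~ P bot. Proof. apply HP. Qed.
Lemma prime_up a b : P a -> lat_le a b -> P b. Proof. apply HP. Qed.

Lemma prime_top_iff : P top <-> True. Proof. split; [trivial | intros _; exact prime_top]. Qed.
Lemma prime_bot_iff : P bot <-> False. Proof. split; [exact prime_bot | contradiction]. Qed.

Lemma prime_meet a b : P (meet a b) <-> P a /\ P b.
Proof.
  split.
  - intro H. split; eapply prime_up; eauto using lat_le_meet_l, lat_le_meet_r.
  - intros [Ha Hb]. apply HP; assumption.
Qed.

Lemma prime_join a b : P (join a b) <-> P a \/ P b.
Proof.
  split; [apply HP |].
  intros [H | H]; eapply prime_up; eauto using lat_le_join_l, lat_le_join_r.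
Qed.

End PrimeFilter.

(* [r x w] reads "x entails w"; [r := lat_le] gives the usual prime filter
   theorem, other choices produce prime filters closed under extra rules. *)
Section RelativePrimeFilterTheorem.
Variable r : T -> T -> Prop.
Hypothesis r_of_le : forall x y, lat_le x y -> r x y.
Hypothesis r_trans : forall x y z, r x y -> r y z -> r x z.
Hypothesis r_meet : forall x y z, r x y -> r x z -> r x (meet y z).
Hypothesis r_join : forall x y z, r x z -> r y z -> r (join x y) z.

Lemma r_antimono x' x w : lat_le x' x -> r x w -> r x' w.
Proof. intro le. apply r_trans, r_of_le, le. Qed.

Definition r_theory_avoiding b (S : T -> Prop) : Prop :=
  (forall x y, S x -> r x y -> S y) /\ (forall x y, S x -> S y -> S (meet x y)) /\ ~ S b.

Lemma r_theory_avoiding_chain b (F : (T -> Prop) -> Prop) :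
  (forall X, F X -> r_theory_avoiding b X) ->
  (forall X Y, F X -> F Y -> (forall t, X t -> Y t) \/ (forall t, Y t -> X t)) ->
  r_theory_avoiding b (fun t => exists2 X, F X & X t).
Proof.
  intros FP Ftot. split; [| split].
  - intros x y [X FX Xx] rxy. exists X; [exact FX |]. apply (FP X FX) with x; assumption.
  - intros x y [X FX Xx] [Y FY Yy].
    destruct (Ftot X Y FX FY) as [XY | YX]; [exists Y | exists X]; auto; apply FP; auto.
  - intros [X FX Xb]. exact (proj2 (proj2 (FP X FX)) Xb).
Qed.

(* Otherwise [{w | r (q /\ x) w for some q in Q}] is a larger theory avoiding [b]. *)
Lemma r_theory_adjoin b (Q : T -> Prop) x :
  r_theory_avoiding b Q -> Q top ->
  (forall B, (forall t, Q t -> B t) -> r_theory_avoiding b B -> forall t, B t -> Q t) ->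
  ~ Q x -> exists q, Q q /\ r (meet q x) b.
Proof.
  intros [Qr [Qmeet _]] Qtop maxQ nQx. apply NNPP; intro Hno. apply nQx.
  apply (maxQ (fun w => exists q, Q q /\ r (meet q x) w)).
  - intros t Qt. exists t. split; [exact Qt |]. apply r_of_le, lat_le_meet_l.
  - split; [| split].
    + intros y z [q [Qq rqy]] ryz. exists q. split; [exact Qq |]. apply r_trans with y; assumption.
    + intros y z [q1 [Q1 r1]] [q2 [Q2 r2]]. exists (meet q1 q2). split; [apply Qmeet; assumption |].
      apply r_meet; [apply r_antimono with (meet q1 x) | apply r_antimono with (meet q2 x)];
        try assumption; apply lat_le_meet; eauto using lat_le_trans, lat_le_meet_l, lat_le_meet_r.
    + exact Hno.
  - exists top. split; [exact Qtop |]. apply r_of_le, lat_le_meet_r.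
Qed.

Theorem relative_prime_filter a b : ~ r a b ->
  exists Q, lat_prime_filter Q /\ Q a /\ ~ Q b /\ forall x y, Q x -> r x y -> Q y.
Proof.
  intro nab.
  destruct (@zorn_above T (r_theory_avoiding b) (r a)) as [Q [aQ [QP maxQ]]].
  - split; [| split]; [eauto | intros; apply r_meet; assumption | exact nab].
  - intros F _. apply r_theory_avoiding_chain.
  - assert (Qa : Q a) by (apply aQ, r_of_le, lat_le_refl).
    destruct QP as [Qr [Qmeet Qb]].
    assert (Qtop : Q top) by (apply Qr with a; [exact Qa | apply r_of_le, lat_le_top]).
    exists Q. split; [| split; [exact Qa | split; assumption]].
    split; [exact Qtop | split; [| split; [exact Qmeet | split]]].
    + intro Qbot. apply Qb, Qr with bot; [exact Qbot | apply r_of_le, lat_le_bot].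
    + intros x y Qx le. apply Qr with x; [exact Qx | apply r_of_le, le].
    + intros x y Qxy. apply NNPP; intro Hn. apply not_or_and in Hn as [nQx nQy].
      destruct (r_theory_adjoin x (conj Qr (conj Qmeet Qb)) Qtop maxQ nQx) as [q1 [Q1 r1]].
      destruct (r_theory_adjoin y (conj Qr (conj Qmeet Qb)) Qtop maxQ nQy) as [q2 [Q2 r2]].
      apply Qb, Qr with (meet (meet q1 q2) (join x y)); [apply Qmeet; auto |].
      rewrite (meet_distr L). apply r_join.
      * apply r_antimono with (meet q1 x); [| exact r1].
        apply lat_le_meet; eauto using lat_le_trans, lat_le_meet_l, lat_le_meet_r.
      * apply r_antimono with (meet q2 y); [| exact r2].
        apply lat_le_meet; eauto using lat_le_trans, lat_le_meet_l, lat_le_meet_r.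
Qed.

End RelativePrimeFilterTheorem.

Lemma prime_filter_separation a b :
  ~ lat_le a b -> exists P, lat_prime_filter P /\ P a /\ ~ P b.
Proof.
  intro nab.
  destruct (@relative_prime_filter lat_le) with (a := a) (b := b)
    as [P [HP [Pa [Pb _]]]]; eauto using lat_le_trans, lat_le_meet, lat_le_join.
Qed.

Lemma lat_le_of_prime_filters a b :
  (forall P, lat_prime_filter P -> P a -> P b) -> lat_le a b.
Proof.
  intro H. apply NNPP; intro nab.
  destruct (prime_filter_separation nab) as [P [HP [Pa Pb]]]. exact (Pb (H P HP Pa)).
Qed.

Lemma eq_of_prime_filters a b :
  (forall P, lat_prime_filter P -> (P a <-> P b)) -> a = b.
Proof.
  intro H. apply lat_le_antisym; apply lat_le_of_prime_filters; intros P HP; apply (H P HP).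
Qed.

(* A prime filter closed under "[x] entails [w] outside finitely many boxes
   of the cover" lies in no box of the cover. *)
Theorem prime_spectrum_compact (K : T -> T -> Prop) :
  (forall P, lat_prime_filter P -> exists a c, K a c /\ P a /\ ~ P c) ->
  exists Lc, Forall (fun p => K (fst p) (snd p)) Lc /\
    forall P, lat_prime_filter P -> boxes Lc P.
Proof.
  intro cover. apply NNPP; intro nfin.
  set (r := fun x w => exists Lc, Forall (fun p => K (fst p) (snd p)) Lc /\
    forall P, lat_prime_filter P -> ~ boxes Lc P -> P x -> P w).
  assert (r_app : forall x y L1 L2, Forall (fun p => K (fst p) (snd p)) L1 ->
    Forall (fun p => K (fst p) (snd p)) L2 ->
    (forall P, lat_prime_filter P -> ~ boxes L1 P -> ~ boxes L2 P -> P x -> P y) ->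
    r x y).
  { intros x y L1 L2 K1 K2 H. exists (L1 ++ L2).
    split; [apply Forall_app; split; assumption |].
    intros P HP nb. rewrite boxes_app in nb. apply not_or_and in nb as [n1 n2].
    exact (H P HP n1 n2). }
  destruct (@relative_prime_filter r) with (a := top) (b := bot)
    as [Q [HQ [_ [_ Qr]]]].
  - intros x y le. exists []. split; [constructor |].
    intros P HP _ Px. exact (prime_up HP Px le).
  - intros x y z [L1 [K1 H1]] [L2 [K2 H2]]. apply (r_app _ _ L1 L2); auto.
    intros P HP n1 n2 Px. exact (H2 P HP n2 (H1 P HP n1 Px)).
  - intros x y z [L1 [K1 H1]] [L2 [K2 H2]]. apply (r_app _ _ L1 L2); auto.
    intros P HP n1 n2 Px. apply (prime_meet HP).
    split; [exact (H1 P HP n1 Px) | exact (H2 P HP n2 Px)].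
  - intros x y z [L1 [K1 H1]] [L2 [K2 H2]]. apply (r_app _ _ L1 L2); auto.
    intros P HP n1 n2 Pxy. apply (prime_join HP) in Pxy as [Px | Py];
      [exact (H1 P HP n1 Px) | exact (H2 P HP n2 Py)].
  - intros [Lc [KL HL]]. apply nfin. exists Lc. split; [exact KL |].
    intros P HP. apply NNPP; intro nb. exact (prime_bot HP (HL P HP nb (prime_top HP))).
  - destruct (cover Q HQ) as [a [c [Kac [Qa nQc]]]]. apply nQc, Qr with a; [exact Qa |].
    exists [(a, c)]. split; [repeat constructor; exact Kac |].
    intros P HP nb Pa. apply NNPP; intro nPc. apply nb. left. split; assumption.
Qed.

End BoundedDistributiveLattice.

Lemma lat_prime_filter_comap (T T' : Type) (meet join : T -> T -> T) (bot top : T)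
  (meet' join' : T' -> T' -> T') (bot' top' : T') (f : T -> T') (Q : T' -> Prop) :
  (forall a b, f (meet a b) = meet' (f a) (f b)) ->
  (forall a b, f (join a b) = join' (f a) (f b)) -> f bot = bot' -> f top = top' ->
  lat_prime_filter meet' join' bot' top' Q ->
  lat_prime_filter meet join bot top (fun a => Q (f a)).
Proof.
  intros fm fj f0 f1 [Q1 [Q0 [Qm [Qu Qp]]]]. unfold lat_prime_filter. rewrite f0, f1.
  split; [exact Q1 | split; [exact Q0 | split; [| split]]].
  - intros a b Qa Qb. rewrite fm. auto.
  - intros a b Qa ab. apply (Qu (f a)); [exact Qa |].
    unfold lat_le in *. rewrite <- fm, ab. reflexivity.
  - intros a b Qab. rewrite fj in Qab. auto.
Qed.

(** * The relations R_A and S_A *)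

Section WHBAlgebra.
Variable A : WHB.
Hypothesis HA : whb_axioms A.
Let LA := whb_bdl HA.
Local Notation imp := (wimp A).
Local Notation coimp := (wcoimp A).

Lemma imp_of_le a b : wle a b -> imp a b = w1 A.
Proof.
  unfold wle. intro ab. rewrite <- (whb_imp_refl HA a). rewrite <- ab at 3.
  rewrite (whb_imp_meet HA), (whb_imp_refl HA), (meetC LA), (meet1 LA). reflexivity.
Qed.

Lemma coimp_of_le a b : wle a b -> coimp a b = w0 A.
Proof.
  unfold wle. intro ab. rewrite <- (whb_coimp_refl HA a). rewrite <- ab at 3.
  rewrite (whb_coimp_meet HA), (whb_coimp_refl HA), (joinC LA), (join0 LA). reflexivity.
Qed.

Lemma R_witness P a b : prime_filter P -> ~ P (imp a b) ->
  exists Q, prime_filter Q /\ relR P Q /\ Q a /\ ~ Q b.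
Proof.
  intros HP nab.
  destruct (relative_prime_filter LA (fun x y => P (imp x y))) with (a := a) (b := b)
    as [Q [HQ [Qa [nQb Qr]]]]; [| | | | exact nab |].
  - intros x y le. rewrite (imp_of_le le). exact (prime_top HP).
  - intros x y z xy yz. apply (prime_up HP) with (wmeet A (imp x y) (imp y z));
      [apply (prime_meet LA HP); split; assumption | apply (whb_imp_trans HA)].
  - intros x y z xy xz. rewrite (whb_imp_meet HA). apply (prime_meet LA HP). split; assumption.
  - intros x y z xz yz. rewrite (whb_imp_join HA). apply (prime_meet LA HP). split; assumption.
  - exists Q. split; [exact HQ | split; [| split; assumption]].
    intros x y Pxy Qx. exact (Qr x y Qx Pxy).
Qed.

Lemma S_witness P a b : prime_filter P -> P (coimp a b) ->
  exists Q, prime_filter Q /\ relS P Q /\ Q a /\ ~ Q b.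
Proof.
  intros HP Pab.
  destruct (relative_prime_filter LA (fun x y => ~ P (coimp x y))) with (a := a) (b := b)
    as [Q [HQ [Qa [nQb Qr]]]]; [| | | | tauto |].
  - intros x y le. rewrite (coimp_of_le le). exact (prime_bot HP).
  - intros x y z xy yz Pxz.
    destruct (proj1 (prime_join LA HP _ _) (prime_up HP Pxz (whb_coimp_trans HA x y z)));
      contradiction.
  - intros x y z xy xz. rewrite (whb_coimp_meet HA), (prime_join LA HP). tauto.
  - intros x y z xz yz. rewrite (whb_coimp_join HA), (prime_join LA HP). tauto.
  - exists Q. split; [exact HQ | split; [| split; assumption]].
    intros x y Qx nQy. apply NNPP; intro nPxy. exact (nQy (Qr x y Qx nPxy)).
Qed.

(* Axioms 9 and 10 say exactly that [S_A] is the converse of [R_A]. *)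
Lemma relS_iff_relR (P Q : A -> Prop) : prime_filter P -> prime_filter Q ->
  (relS P Q <-> relR Q P).
Proof.
  intros HP HQ. split.
  - intros HS a b Pab Pa. apply (prime_up HP) with (wmeet A a (coimp (imp a b) (w0 A)));
      [| apply (whb_ax9 HA)].
    apply (prime_meet LA HP). split; [exact Pa |]. apply HS; [exact Pab | exact (prime_bot HQ)].
  - intros HR a b Qa nQb.
    destruct (proj1 (prime_join LA HQ _ _) (prime_up HQ Qa (whb_ax10 HA a b)))
      as [Qb | Q1ab]; [contradiction |].
    exact (HR _ _ Q1ab (prime_top HP)).
Qed.

Lemma G_op_sigma P a c : prime_filter P ->
  (G_op (fun Q => ~ Q a \/ Q c) P <-> P (imp a c)).
Proof.
  intro HP. split.
  - intro HG. apply NNPP; intro nac.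
    destruct (R_witness a c HP nac) as [Q [HQ [PQ [Qa nQc]]]].
    destruct (HG Q HQ PQ); contradiction.
  - intros Pac Q HQ PQ. destruct (classic (Q a)) as [Qa | nQa]; [right | left]; eauto.
Qed.

Lemma H_op_sigma P a c : prime_filter P ->
  (H_op (fun Q => ~ Q a \/ Q c) P <-> ~ P (coimp a c)).
Proof.
  intro HP. split.
  - intros HH Pac. destruct (S_witness a c HP Pac) as [Q [HQ [PQ [Qa nQc]]]].
    destruct (HH Q HQ PQ); contradiction.
  - intros nPac Q HQ PQ. apply NNPP; intro H. apply not_or_and in H as [nnQa nQc].
    exact (nPac (PQ a c (NNPP _ nnQa) nQc)).
Qed.

End WHBAlgebra.

(** * Box unions are the clopen sets *)

Definition is_box_union {A : WHB} (U : pset A) : Prop :=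
  exists L : list (A * A), pseteq U (boxes L).

Lemma pseteq_sym {A : WHB} (U V : pset A) : pseteq U V -> pseteq V U.
Proof. intros UV P HP. symmetry. apply UV, HP. Qed.

Lemma pseteq_trans {A : WHB} (U V W : pset A) : pseteq U V -> pseteq V W -> pseteq U W.
Proof. intros UV VW P HP. rewrite (UV P HP). apply VW, HP. Qed.

Lemma G_op_ext {A : WHB} (U V : pset A) : pseteq U V -> pseteq (G_op U) (G_op V).
Proof. intros UV P _. split; intros HG Q HQ PQ; apply (UV Q HQ); auto. Qed.

Lemma H_op_ext {A : WHB} (U V : pset A) : pseteq U V -> pseteq (H_op U) (H_op V).
Proof. intros UV P _. split; intros HH Q HQ PQ; apply (UV Q HQ); auto. Qed.

Lemma box_union_ext {A : WHB} (U V : pset A) :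
  pseteq U V -> is_box_union U -> is_box_union V.
Proof. intros UV [L HL]. exists L. exact (pseteq_trans (pseteq_sym UV) HL). Qed.

Section BoxUnions.
Variable A : WHB.
Hypothesis HA : whb_axioms A.
Let LA := whb_bdl HA.

(* The intersection of the boxes of [(a, c)] and [(a', c')] is the box of [(a /\ a', c \/ c')]. *)
Definition box_meets (L M : list (A * A)) : list (A * A) :=
  flat_map (fun p => map (fun q => (wmeet A (fst p) (fst q), wjoin A (snd p) (snd q))) M) L.

Lemma boxes_box_meets L M P : prime_filter P ->
  (boxes (box_meets L M) P <-> boxes L P /\ boxes M P).
Proof.
  intro HP.
  assert (Hp : forall p, boxes (map (fun q => (wmeet A (fst p) (fst q),
                                                wjoin A (snd p) (snd q))) M) P
                         <-> (P (fst p) /\ ~ P (snd p)) /\ boxes M P).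
  { intro p. induction M as [| q M IHM]; simpl; [tauto |].
    rewrite IHM, (prime_meet LA HP), (prime_join LA HP). tauto. }
  induction L as [| p L IH]; simpl; [tauto |].
  unfold box_meets in *; simpl. rewrite boxes_app, IH, Hp. tauto.
Qed.

Lemma box_union_and (U V : pset A) :
  is_box_union U -> is_box_union V -> is_box_union (fun P => U P /\ V P).
Proof.
  intros [L HL] [M HM]. exists (box_meets L M). intros P HP.
  rewrite boxes_box_meets, (HL P HP), (HM P HP) by exact HP. reflexivity.
Qed.

Lemma box_union_or (U V : pset A) :
  is_box_union U -> is_box_union V -> is_box_union (fun P => U P \/ V P).
Proof.
  intros [L HL] [M HM]. exists (L ++ M). intros P HP.
  rewrite boxes_app, (HL P HP), (HM P HP). reflexivity.
Qed.

Lemma box_union_false : is_box_union (A := A) (fun _ => False).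
Proof. exists []. intros P _. reflexivity. Qed.

Lemma box_union_sigma (a : A) : is_box_union (sigma a).
Proof.
  exists [(a, w0 A)]. intros P HP; simpl. pose proof (prime_bot HP). unfold sigma. tauto.
Qed.

Lemma box_union_true : is_box_union (A := A) (fun _ => True).
Proof.
  apply box_union_ext with (sigma (w1 A)), box_union_sigma.
  intros P HP. pose proof (prime_top HP). unfold sigma. tauto.
Qed.

Lemma box_union_coboxes (M : list (A * A)) : is_box_union (coboxes M).
Proof.
  induction M as [| p M IH]; simpl; [exact box_union_true |].
  apply box_union_and; [| exact IH].
  exists [(w1 A, fst p); (snd p, w0 A)]. intros P HP; simpl.
  pose proof (prime_top HP). pose proof (prime_bot HP).
  destruct (classic (P (fst p))); tauto.
Qed.

Lemma box_union_not (U : pset A) : is_box_union U -> is_box_union (fun P => ~ U P).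
Proof.
  intros [L HL]. apply box_union_ext with (coboxes L), box_union_coboxes.
  intros P HP. rewrite (HL P HP), boxes_not_coboxes. tauto.
Qed.

Lemma box_union_cnf (U : pset A) : is_box_union U -> exists M, pseteq U (coboxes M).
Proof.
  intro HU. destruct (box_union_not HU) as [M HM]. exists M. intros P HP.
  specialize (HM P HP). rewrite boxes_not_coboxes in HM. tauto.
Qed.

(* In [coboxes], the pair [(1, x)] stands for [sigma x] and [(x, 0)] for its complement. *)
Definition imp_pairs (M : list (A * A)) : list (A * A) :=
  map (fun p => (w1 A, wimp A (fst p) (snd p))) M.
Definition coimp_pairs (M : list (A * A)) : list (A * A) :=
  map (fun p => (wcoimp A (fst p) (snd p), w0 A)) M.

Lemma G_op_coboxes (M : list (A * A)) : pseteq (G_op (coboxes M)) (coboxes (imp_pairs M)).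
Proof.
  intros P HP. pose proof (prime_top HP). induction M as [| p M IH]; simpl.
  - unfold G_op. tauto.
  - rewrite <- IH, <- (G_op_sigma HA (fst p) (snd p) HP). unfold G_op. split.
    + intro HG. split; [right |]; intros Q HQ PQ; apply (HG Q HQ PQ).
    + intros [[? | HG1] HG2] Q HQ PQ; [contradiction |]. split; auto.
Qed.

Lemma H_op_coboxes (M : list (A * A)) : pseteq (H_op (coboxes M)) (coboxes (coimp_pairs M)).
Proof.
  intros P HP. pose proof (prime_bot HP). induction M as [| p M IH]; simpl.
  - unfold H_op. tauto.
  - rewrite <- IH, <- (H_op_sigma HA (fst p) (snd p) HP). unfold H_op. split.
    + intro HH. split; [left |]; intros Q HQ PQ; apply (HH Q HQ PQ).
    + intros [[HH1 | ?] HH2] Q HQ PQ; [| contradiction]. split; auto.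
Qed.

Lemma box_union_G (U : pset A) : is_box_union U -> is_box_union (G_op U).
Proof.
  intro HU. destruct (box_union_cnf HU) as [M HM].
  apply box_union_ext with (coboxes (imp_pairs M)), box_union_coboxes.
  exact (pseteq_sym (pseteq_trans (G_op_ext HM) (G_op_coboxes M))).
Qed.

Lemma box_union_H (U : pset A) : is_box_union U -> is_box_union (H_op U).
Proof.
  intro HU. destruct (box_union_cnf HU) as [M HM].
  apply box_union_ext with (coboxes (coimp_pairs M)), box_union_coboxes.
  exact (pseteq_sym (pseteq_trans (H_op_ext HM) (H_op_coboxes M))).
Qed.

End BoxUnions.

Section ClopenBoxUnions.
Variable A : WHB.
Hypothesis HA : whb_axioms A.
Let LA := whb_bdl HA.

Definition subbasic_meet (l : list (bool * A)) : A :=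
  fold_right (fun (p : bool * A) (m : A) => if fst p then wmeet A (snd p) m else m) (w1 A) l.
Definition subbasic_join (l : list (bool * A)) : A :=
  fold_right (fun (p : bool * A) (j : A) => if fst p then j else wjoin A (snd p) j) (w0 A) l.

Lemma subbasics_box l Q : prime_filter Q ->
  (Forall (fun p => subbasic p Q) l <-> Q (subbasic_meet l) /\ ~ Q (subbasic_join l)).
Proof.
  intro HQ. induction l as [| [[|] x] l IH]; simpl.
  - pose proof (prime_top HQ). pose proof (prime_bot HQ). split; [tauto | constructor].
  - rewrite Forall_cons_iff, IH, (prime_meet LA HQ). unfold subbasic; simpl. tauto.
  - rewrite Forall_cons_iff, IH, (prime_join LA HQ). unfold subbasic; simpl. tauto.
Qed.

Lemma open_box_nbhd (U : pset A) P : t_open U -> prime_filter P -> U P ->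
  exists a c, P a /\ ~ P c /\ forall Q, prime_filter Q -> Q a -> ~ Q c -> U Q.
Proof.
  intros HU HP UP. destruct (HU P HP UP) as [l [Pl lU]].
  exists (subbasic_meet l), (subbasic_join l).
  rewrite (subbasics_box l HP) in Pl. split; [apply Pl | split; [apply Pl |]].
  intros Q HQ Qa nQc. apply lU; [exact HQ |]. apply (subbasics_box l HQ). split; assumption.
Qed.

Lemma box_union_open (U : pset A) : is_box_union U -> t_open U.
Proof.
  intros [L HL] P HP UP. apply (HL P HP), boxes_In in UP as [[a c] [inL [Pa nPc]]].
  exists [(true, a); (false, c)]. split; [repeat constructor; assumption |].
  intros Q HQ HQl. apply (HL Q HQ), boxes_In. exists (a, c). split; [exact inL |].
  inversion HQl as [| ? ? Qa HQl']; inversion HQl'. split; assumption.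
Qed.

Lemma box_union_clopen (U : pset A) : is_box_union U -> clopen U.
Proof.
  intro HU. split; apply box_union_open; [exact HU | exact (box_union_not HA HU)].
Qed.

(* Compactness: finitely many boxes, each inside [U] or inside its complement,
   cover the prime spectrum; [U] is the union of those inside it. *)
Lemma clopen_box_union (U : pset A) : clopen U -> is_box_union U.
Proof.
  intros [Uopen Uclosed].
  set (inside := fun (V : pset A) (p : A * A) =>
    forall Q, prime_filter Q -> Q (fst p) -> ~ Q (snd p) -> V Q).
  destruct (prime_spectrum_compact LA
              (fun a c => inside U (a, c) \/ inside (fun Q => ~ U Q) (a, c)))
    as [Lc [KLc coverLc]].
  - intros P HP. destruct (classic (U P)) as [UP | nUP].
    + destruct (open_box_nbhd Uopen HP UP) as [a [c [Pa [nPc Hac]]]].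
      exists a, c. split; [left; exact Hac | split; assumption].
    + destruct (open_box_nbhd Uclosed HP nUP) as [a [c [Pa [nPc Hac]]]].
      exists a, c. split; [right; exact Hac | split; assumption].
  - assert (sub : exists L, (forall P, prime_filter P -> boxes L P -> U P) /\
                            (forall P, prime_filter P -> boxes Lc P -> U P -> boxes L P)).
    { clear coverLc. induction Lc as [| p Lc IH]; [exists []; simpl; tauto |].
      inversion KLc as [| ? ? Kp KLc']. destruct (IH KLc') as [L [LU LcL]].
      destruct Kp as [pU | pnU]; [exists (p :: L) | exists L]; simpl; split; auto.
      - intros P HP [[Pa nPc] | PL]; [exact (pU P HP Pa nPc) | auto].
      - intros P HP [Pp | PL] UP; [left |]; auto.
      - intros P HP [[Pa nPc] | PL] UP; [exfalso; exact (pnU P HP Pa nPc UP) | auto]. }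
    destruct sub as [L [LU LcL]]. exists L. intros P HP. split; auto.
Qed.

End ClopenBoxUnions.

(** * The tense algebra T(A) *)

Section DualTenseAlgebra.
Variable A : WHB.
Hypothesis HA : whb_axioms A.

(* Restricting to prime filters makes equality of elements of [T(A)] extensional. *)
Record clopen_set := ClopenSet {
  cset : pset A;
  cset_box : is_box_union cset;
  cset_primes : forall P, cset P -> prime_filter P
}.

Lemma box_union_primes (U : pset A) :
  is_box_union U -> is_box_union (fun P => prime_filter P /\ U P).
Proof. apply box_union_ext. intros P HP. tauto. Qed.

Definition clopen_of (U : pset A) (HU : is_box_union U) : clopen_set :=
  ClopenSet (box_union_primes HU) (fun P H => proj1 H).

Lemma clopen_set_eq (U V : clopen_set) :
  (forall P, prime_filter P -> (cset U P <-> cset V P)) -> U = V.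
Proof.
  destruct U as [u ubox uprimes], V as [v vbox vprimes]; simpl. intro uv.
  assert (e : u = v).
  { apply set_ext. intro P. split; intro H; apply uv; eauto. }
  subst v. f_equal; apply proof_irrelevance.
Qed.

Definition Tmeet (U V : clopen_set) := clopen_of (box_union_and HA (cset_box U) (cset_box V)).
Definition Tjoin (U V : clopen_set) := clopen_of (box_union_or (cset_box U) (cset_box V)).
Definition Tneg (U : clopen_set) := clopen_of (box_union_not HA (cset_box U)).
Definition Tbot := clopen_of (box_union_false A).
Definition Ttop := clopen_of (box_union_true A).
Definition TG (U : clopen_set) := clopen_of (box_union_G HA (cset_box U)).
Definition TH (U : clopen_set) := clopen_of (box_union_H HA (cset_box U)).
Definition Tsigma (a : A) := clopen_of (box_union_sigma A a).

Definition T_alg : TBA := Build_TBA Tmeet Tjoin Tneg Tbot Ttop TG TH.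

Lemma T_alg_le (U V : T_alg) :
  tle U V <-> forall P, prime_filter P -> cset U P -> cset V P.
Proof.
  unfold tle. split.
  - intros UV P HP UP. rewrite <- UV in UP. apply UP.
  - intro UV. apply clopen_set_eq. intros P HP. simpl. split; [tauto |].
    intro UP. split; [exact HP | split; auto].
Qed.

(* The adjunctions [P -| G] and [F -| H] come from [S_A] being the converse of [R_A]. *)
Lemma T_alg_axioms : tba_axioms T_alg.
Proof.
  split.
  - split; intros; apply clopen_set_eq; intros P HP; simpl; tauto.
  - intro U. apply clopen_set_eq. intros P HP. simpl. tauto.
  - intro U. apply clopen_set_eq. intros P HP. simpl. destruct (classic (cset U P)); tauto.
  - intros U V. unfold tP. rewrite !T_alg_le. simpl. split.
    + intros UV P HP UP. split; [exact HP |]. intros Q HQ PQ. apply UV; [exact HQ |].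
      split; [exact HQ |]. intros [_ HH].
      apply (HH P HP); [apply (relS_iff_relR HA HQ HP), PQ | exact UP].
    + intros UV P HP [_ HnH]. apply NNPP; intro nVP. apply HnH. split; [exact HP |].
      intros Q HQ PQ. split; [exact HQ |]. intro UQ. destruct (UV Q HQ UQ) as [_ HG].
      apply nVP, HG; [exact HP |]. apply (relS_iff_relR HA HP HQ), PQ.
  - intros U V. unfold tF. rewrite !T_alg_le. simpl. split.
    + intros UV P HP UP. split; [exact HP |]. intros Q HQ PQ. apply UV; [exact HQ |].
      split; [exact HQ |]. intros [_ HG].
      apply (HG P HP); [apply (relS_iff_relR HA HP HQ), PQ | exact UP].
    + intros UV P HP [_ HnG]. apply NNPP; intro nVP. apply HnG. split; [exact HP |].
      intros Q HQ PQ. split; [exact HQ |]. intro UQ. destruct (UV Q HQ UQ) as [_ HH].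
      apply nVP, HH; [exact HP |]. apply (relS_iff_relR HA HQ HP), PQ.
Qed.

End DualTenseAlgebra.

(** * The WHB-algebra of a tense algebra *)

(* [a <- c] is [P (a /\ ~ c)]. *)
Definition tense_whb (C : TBA) : WHB :=
  @Build_WHB (tcar C) (tmeet C) (tjoin C)
    (fun a c => tG C (tjoin C (tneg C a) c))
    (fun a c => tneg C (tH C (tjoin C (tneg C a) c))) (t0 C) (t1 C).

Section TenseAlgebra.
Variable C : TBA.
Hypothesis HC : tba_axioms C.
Let LC := tba_bdl HC.
Local Notation meet := (tmeet C).
Local Notation join := (tjoin C).
Local Notation neg := (tneg C).
Local Notation G := (tG C).
Local Notation H := (tH C).
Local Notation le := (lat_le (tmeet C)).
Local Notation prime := (lat_prime_filter (tmeet C) (tjoin C) (t0 C) (t1 C)).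

Lemma prime_neg V x : prime V -> (V (neg x) <-> ~ V x).
Proof.
  intro HV. split.
  - intros Vnx Vx. apply (prime_bot HV). rewrite <- (tba_compl_meet HC x).
    apply (prime_meet LC HV). split; assumption.
  - intro nVx. assert (Vxnx : V (join x (neg x))).
    { rewrite (tba_compl_join HC). exact (prime_top HV). }
    apply (prime_join LC HV) in Vxnx. tauto.
Qed.

Ltac prime_membership V HV :=
  repeat first [ rewrite (prime_meet LC HV) | rewrite (prime_join LC HV)
               | rewrite (prime_neg _ HV) | rewrite (prime_bot_iff HV)
               | rewrite (prime_top_iff HV) ].

Ltac eq_by_prime_filters :=
  apply (eq_of_prime_filters LC); let V := fresh "V" in let HV := fresh "HV" in
  intros V HV; prime_membership V HV.

Ltac le_by_prime_filters :=
  apply (lat_le_of_prime_filters LC); let V := fresh "V" in let HV := fresh "HV" in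
  intros V HV; prime_membership V HV.

Lemma G_mono x y : le x y -> le (G x) (G y).
Proof.
  intro xy. apply (tba_PG HC), (lat_le_trans LC) with x; [| exact xy].
  apply (tba_PG HC), (lat_le_refl LC).
Qed.

Lemma G_meet x y : G (meet x y) = meet (G x) (G y).
Proof.
  apply (lat_le_antisym LC).
  - apply (lat_le_meet LC); apply G_mono; [apply (lat_le_meet_l LC) | apply (lat_le_meet_r LC)].
  - apply (tba_PG HC), (lat_le_meet LC); apply (tba_PG HC);
      [apply (lat_le_meet_l LC) | apply (lat_le_meet_r LC)].
Qed.

Lemma G_top : G (t1 C) = t1 C.
Proof. apply (lat_le_antisym LC); [apply (lat_le_top LC) | apply (tba_PG HC), (lat_le_top LC)]. Qed.

Lemma H_mono x y : le x y -> le (H x) (H y).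
Proof.
  intro xy. apply (tba_FH HC), (lat_le_trans LC) with x; [| exact xy].
  apply (tba_FH HC), (lat_le_refl LC).
Qed.

Lemma H_meet x y : H (meet x y) = meet (H x) (H y).
Proof.
  apply (lat_le_antisym LC).
  - apply (lat_le_meet LC); apply H_mono; [apply (lat_le_meet_l LC) | apply (lat_le_meet_r LC)].
  - apply (tba_FH HC), (lat_le_meet LC); apply (tba_FH HC);
      [apply (lat_le_meet_l LC) | apply (lat_le_meet_r LC)].
Qed.

Lemma H_top : H (t1 C) = t1 C.
Proof. apply (lat_le_antisym LC); [apply (lat_le_top LC) | apply (tba_FH HC), (lat_le_top LC)]. Qed.

Lemma excluded_middle_top a : join (neg a) a = t1 C.
Proof. eq_by_prime_filters. destruct (classic (V a)); tauto. Qed.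

Lemma le_GP x : le x (G (tP x)).
Proof. apply (tba_PG HC), (lat_le_refl LC). Qed.

Lemma PG_le x : le (tP (G x)) x.
Proof. apply (tba_PG HC), (lat_le_refl LC). Qed.

Lemma tense_imp_trans a b c :
  le (meet (G (join (neg a) b)) (G (join (neg b) c))) (G (join (neg a) c)).
Proof. rewrite <- G_meet. apply G_mono. le_by_prime_filters. destruct (classic (V b)); tauto. Qed.

Lemma tense_coimp_trans a b c :
  le (neg (H (join (neg a) c))) (join (neg (H (join (neg a) b))) (neg (H (join (neg b) c)))).
Proof.
  assert (trans : le (meet (H (join (neg a) b)) (H (join (neg b) c))) (H (join (neg a) c))).
  { rewrite <- H_meet. apply H_mono. le_by_prime_filters. destruct (classic (V b)); tauto. }
  le_by_prime_filters. intro nHac. apply NNPP; intro Hn. apply nHac.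
  apply (prime_up HV) with (meet (H (join (neg a) b)) (H (join (neg b) c))); [| exact trans].
  prime_membership V HV. tauto.
Qed.

Lemma tense_ax9 a b : le (meet a (neg (H (join (neg (G (join (neg a) b))) (t0 C))))) b.
Proof.
  rewrite (join0 LC). apply (lat_le_trans LC) with (meet a (join (neg a) b)).
  - apply (lat_le_meet LC); [apply (lat_le_meet_l LC) |].
    apply (lat_le_trans LC) with (tP (G (join (neg a) b))); [apply (lat_le_meet_r LC) |].
    apply PG_le.
  - le_by_prime_filters. tauto.
Qed.

(* [1 -> (a <- b)] is [G (P (a /\ ~ b))]. *)
Lemma tense_ax10 a b : le a (join b (G (join (neg (t1 C)) (neg (H (join (neg a) b)))))).
Proof.
  replace (join (neg (t1 C)) (neg (H (join (neg a) b)))) with (tP (meet a (neg b))).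
  2:{ unfold tP. f_equal. replace (neg (meet a (neg b))) with (join (neg a) b)
        by (eq_by_prime_filters; tauto).
      eq_by_prime_filters. tauto. }
  apply (lat_le_trans LC) with (join b (meet a (neg b))).
  - le_by_prime_filters. destruct (classic (V b)); tauto.
  - apply (lat_le_join LC); [apply (lat_le_join_l LC) |].
    apply (lat_le_trans LC) with (G (tP (meet a (neg b))));
      [apply le_GP | apply (lat_le_join_r LC)].
Qed.

Lemma tense_whb_axioms : whb_axioms (tense_whb C).
Proof.
  split; simpl.
  - exact LC.
  - intro a. rewrite excluded_middle_top. apply G_top.
  - intros a b c. rewrite <- G_meet. f_equal. eq_by_prime_filters. tauto.
  - intros a b c. rewrite <- G_meet. f_equal. eq_by_prime_filters. tauto.
  - exact tense_imp_trans.
  - intro a. rewrite excluded_middle_top, H_top. eq_by_prime_filters. tauto.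
  - intros a b c. replace (join (neg (join a b)) c) with (meet (join (neg a) c) (join (neg b) c))
      by (eq_by_prime_filters; tauto).
    rewrite H_meet. eq_by_prime_filters. tauto.
  - intros a b c. replace (join (neg a) (meet b c)) with (meet (join (neg a) b) (join (neg a) c))
      by (eq_by_prime_filters; tauto).
    rewrite H_meet. eq_by_prime_filters. tauto.
  - exact tense_coimp_trans.
  - exact tense_ax9.
  - exact tense_ax10.
Qed.

End TenseAlgebra.

Lemma whb_hom_comp (A B C : WHB) (f : A -> B) (g : B -> C) :
  whb_hom f -> whb_hom g -> whb_hom (fun a => g (f a)).
Proof.
  intros [fm [fj [fi [fc [f0 f1]]]]] [gm [gj [gi [gc [g0 g1]]]]].
  repeat split; intros; rewrite ?fm, ?fj, ?fi, ?fc, ?f0, ?f1, ?gm, ?gj, ?gi, ?gc, ?g0, ?g1;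
    reflexivity.
Qed.

Lemma tba_hom_comp (A B C : TBA) (f : A -> B) (g : B -> C) :
  tba_hom f -> tba_hom g -> tba_hom (fun a => g (f a)).
Proof.
  intros [fm [fj [fn [f0 [f1 [fG fH]]]]]] [gm [gj [gn [g0 [g1 [gG gH]]]]]].
  repeat split; intros;
    rewrite ?fm, ?fj, ?fn, ?f0, ?f1, ?fG, ?fH, ?gm, ?gj, ?gn, ?g0, ?g1, ?gG, ?gH; reflexivity.
Qed.

Lemma tba_hom_id (A : TBA) : tba_hom (fun a : A => a).
Proof. repeat split. Qed.

Lemma tense_whb_hom (C D : TBA) (k : C -> D) :
  tba_hom k -> whb_hom (A := tense_whb C) (B := tense_whb D) k.
Proof.
  intros [km [kj [kn [k0 [k1 [kG kH]]]]]].
  repeat split; simpl; intros;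
    repeat first [rewrite kG | rewrite kH | rewrite kj | rewrite kn | rewrite km]; auto.
Qed.

Lemma whb_hom_prime_comap (A B : WHB) (g : A -> B) Q :
  whb_hom g -> prime_filter Q -> prime_filter (fun a => Q (g a)).
Proof.
  intros [gm [gj [_ [_ [g0 g1]]]]].
  exact (lat_prime_filter_comap (wmeet A) (wjoin A) (w0 A) (w1 A) g gm gj g0 g1).
Qed.

Lemma tba_hom_prime_comap (C D : TBA) (k : C -> D) V :
  tba_hom k -> lat_prime_filter (tmeet D) (tjoin D) (t0 D) (t1 D) V ->
  lat_prime_filter (tmeet C) (tjoin C) (t0 C) (t1 C) (fun c => V (k c)).
Proof.
  intros [km [kj [_ [k0 [k1 _]]]]].
  exact (lat_prime_filter_comap (tmeet C) (tjoin C) (t0 C) (t1 C) k km kj k0 k1).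
Qed.

(** * Representing box unions in a tense algebra *)

Fixpoint join_boxes {A : WHB} {C : TBA} (h : A -> C) (L : list (A * A)) : C :=
  match L with
  | [] => t0 C
  | p :: L' => tjoin C (tmeet C (h (fst p)) (tneg C (h (snd p)))) (join_boxes h L')
  end.

Fixpoint meet_coboxes {A : WHB} {C : TBA} (h : A -> C) (M : list (A * A)) : C :=
  match M with
  | [] => t1 C
  | p :: M' => tmeet C (tjoin C (tneg C (h (fst p))) (h (snd p))) (meet_coboxes h M')
  end.

Lemma join_boxes_hom (A : WHB) (C D : TBA) (h : A -> C) (k : C -> D) L :
  tba_hom k -> k (join_boxes h L) = join_boxes (fun a => k (h a)) L.
Proof.
  intros [km [kj [kn [k0 _]]]]. induction L as [| p L IH]; simpl; [exact k0 |].
  rewrite kj, km, kn, IH. reflexivity.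
Qed.

Definition represents {A : WHB} {C : TBA} (h : A -> C) (U : pset A) (c : C) : Prop :=
  forall V, lat_prime_filter (tmeet C) (tjoin C) (t0 C) (t1 C) V ->
    (V c <-> U (fun a => V (h a))).

Section Representation.
Variables (A : WHB) (C : TBA).
Hypothesis HA : whb_axioms A.
Hypothesis HC : tba_axioms C.
Let LC := tba_bdl HC.
Variable h : A -> C.
Hypothesis Hh : whb_hom (B := tense_whb C) h.
Local Notation prime := (lat_prime_filter (tmeet C) (tjoin C) (t0 C) (t1 C)).

Lemma prime_comap V : prime V -> prime_filter (fun a => V (h a)).
Proof. exact (whb_hom_prime_comap Hh). Qed.

Lemma represents_ext U U' c : pseteq U U' -> represents h U c -> represents h U' c.
Proof. intros UU' Uc V HV. rewrite (Uc V HV). apply UU', prime_comap, HV. Qed.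

Lemma represents_unique U U' c c' :
  pseteq U U' -> represents h U c -> represents h U' c' -> c = c'.
Proof.
  intros UU' Uc U'c'. apply (eq_of_prime_filters LC). intros V HV.
  rewrite (Uc V HV), (U'c' V HV). apply UU', prime_comap, HV.
Qed.

Lemma represents_sigma a : represents h (sigma a) (h a).
Proof. intros V HV. reflexivity. Qed.

Lemma represents_meet U U' c c' : represents h U c -> represents h U' c' ->
  represents h (fun P => U P /\ U' P) (tmeet C c c').
Proof. intros Uc U'c' V HV. rewrite (prime_meet LC HV), (Uc V HV), (U'c' V HV). reflexivity. Qed.

Lemma represents_join U U' c c' : represents h U c -> represents h U' c' ->
  represents h (fun P => U P \/ U' P) (tjoin C c c').
Proof. intros Uc U'c' V HV. rewrite (prime_join LC HV), (Uc V HV), (U'c' V HV). reflexivity. Qed.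

Lemma represents_neg U c : represents h U c -> represents h (fun P => ~ U P) (tneg C c).
Proof. intros Uc V HV. rewrite (prime_neg HC _ HV), (Uc V HV). reflexivity. Qed.

Lemma represents_bot : represents h (fun _ => False) (t0 C).
Proof. intros V HV. apply (prime_bot_iff HV). Qed.

Lemma represents_top : represents h (fun _ => True) (t1 C).
Proof. intros V HV. apply (prime_top_iff HV). Qed.

Lemma represents_boxes L : represents h (boxes L) (join_boxes h L).
Proof.
  induction L as [| p L IH]; simpl; [exact represents_bot |].
  apply represents_join; [| exact IH].
  apply represents_meet; [| apply represents_neg]; apply represents_sigma.
Qed.

Lemma represents_coboxes M : represents h (coboxes M) (meet_coboxes h M).
Proof.
  induction M as [| p M IH]; simpl; [exact represents_top |].
  apply represents_meet; [| exact IH].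
  apply represents_join; [apply represents_neg |]; apply represents_sigma.
Qed.

Lemma represents_exists U : is_box_union U -> exists c, represents h U c.
Proof.
  intros [L HL]. exists (join_boxes h L).
  exact (represents_ext (pseteq_sym HL) (represents_boxes L)).
Qed.

Lemma represents_G_coboxes M :
  represents h (coboxes (imp_pairs A M)) (tG C (meet_coboxes h M)).
Proof.
  destruct Hh as [_ [_ [himp [_ [_ h1]]]]].
  induction M as [| p M IH]; simpl; [rewrite (G_top HC); exact represents_top |].
  rewrite (G_meet HC). apply represents_meet; [| exact IH].
  intros V HV. simpl in himp. rewrite <- himp, h1, (prime_top_iff HV). tauto.
Qed.

Lemma represents_H_coboxes M :
  represents h (coboxes (coimp_pairs A M)) (tH C (meet_coboxes h M)).
Proof.
  destruct Hh as [_ [_ [_ [hcoimp [h0 _]]]]].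
  induction M as [| p M IH]; simpl; [rewrite (H_top HC); exact represents_top |].
  rewrite (H_meet HC). apply represents_meet; [| exact IH].
  intros V HV. simpl in hcoimp. rewrite h0, (prime_bot_iff HV), hcoimp, (prime_neg HC _ HV).
  destruct (classic (V (tH C (tjoin C (tneg C (h (fst p))) (h (snd p)))))); tauto.
Qed.

Lemma represents_G U c : is_box_union U -> represents h U c -> represents h (G_op U) (tG C c).
Proof.
  intros HU Uc. destruct (box_union_cnf HA HU) as [M HM].
  rewrite (represents_unique HM Uc (represents_coboxes M)).
  apply represents_ext with (coboxes (imp_pairs A M)), represents_G_coboxes.
  exact (pseteq_sym (pseteq_trans (G_op_ext HM) (G_op_coboxes HA M))).
Qed.

Lemma represents_H U c : is_box_union U -> represents h U c -> represents h (H_op U) (tH C c).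
Proof.
  intros HU Uc. destruct (box_union_cnf HA HU) as [M HM].
  rewrite (represents_unique HM Uc (represents_coboxes M)).
  apply represents_ext with (coboxes (coimp_pairs A M)), represents_H_coboxes.
  exact (pseteq_sym (pseteq_trans (H_op_ext HM) (H_op_coboxes HA M))).
Qed.

End Representation.

Lemma box_union_T_map (A B : WHB) (g : A -> B) (U : pset A) :
  whb_hom g -> is_box_union U -> is_box_union (T_map g U).
Proof.
  intros Hg [L HL]. exists (map (fun p => (g (fst p), g (snd p))) L). intros Q HQ.
  unfold T_map. rewrite <- boxes_map. apply HL, (whb_hom_prime_comap Hg HQ).
Qed.

Section SigmaEmbedding.
Variable A : WHB.
Hypothesis HA : whb_axioms A.

Lemma Tsigma_hom : whb_hom (B := tense_whb (T_alg HA)) (Tsigma A).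
Proof.
  assert (E : forall a b, pseteq (cset (Tjoin (Tneg HA (Tsigma A a)) (Tsigma A b)))
                                 (fun Q => ~ Q a \/ Q b)).
  { intros a b Q HQ. simpl. unfold sigma. tauto. }
  repeat split; intros; apply clopen_set_eq; intros P HP.
  - simpl. unfold sigma. rewrite (prime_meet (whb_bdl HA) HP). tauto.
  - simpl. unfold sigma. rewrite (prime_join (whb_bdl HA) HP). tauto.
  - change (prime_filter P /\ P (wimp A a b) <->
            prime_filter P /\ G_op (cset (Tjoin (Tneg HA (Tsigma A a)) (Tsigma A b))) P).
    rewrite (G_op_ext (E a b) HP), (G_op_sigma HA a b HP). tauto.
  - change (prime_filter P /\ P (wcoimp A a b) <->
            prime_filter P /\ ~ (prime_filter P /\
              H_op (cset (Tjoin (Tneg HA (Tsigma A a)) (Tsigma A b))) P)).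
    rewrite (H_op_ext (E a b) HP), (H_op_sigma HA a b HP). tauto.
  - simpl. unfold sigma. pose proof (prime_bot HP). tauto.
  - simpl. unfold sigma. pose proof (prime_top HP). tauto.
Qed.

Lemma cset_join_boxes (h : A -> T_alg HA) L P : (forall a, h a = Tsigma A a) ->
  prime_filter P -> (cset (join_boxes h L) P <-> boxes L P).
Proof.
  intros hsigma HP. induction L as [| p L IH]; simpl; [tauto |].
  rewrite !hsigma, IH. simpl. unfold sigma. tauto.
Qed.

End SigmaEmbedding.

(** * Free algebras *)

Lemma free_whb_unique {X : Type} (A B : WHB) (i : X -> A) (h1 h2 : A -> B) :
  is_free_whb i -> whb_axioms B -> whb_hom h1 -> whb_hom h2 ->
  (forall x, h1 (i x) = h2 (i x)) -> forall a, h1 a = h2 a.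
Proof.
  intros [_ Hi] HB H1 H2 E.
  exact (proj2 (Hi B HB (fun x => h2 (i x))) h1 h2 H1 H2 E (fun _ => eq_refl)).
Qed.

Lemma free_tba_unique {X : Type} (A B : TBA) (i : X -> A) (h1 h2 : A -> B) :
  is_free_tba i -> tba_axioms B -> tba_hom h1 -> tba_hom h2 ->
  (forall x, h1 (i x) = h2 (i x)) -> forall a, h1 a = h2 a.
Proof.
  intros [_ Hi] HB H1 H2 E.
  exact (proj2 (Hi B HB (fun x => h2 (i x))) h1 h2 H1 H2 E (fun _ => eq_refl)).
Qed.

Definition free_whb_ext {X : Type} (A B : WHB) (i : X -> A) (Hi : is_free_whb i)
  (HB : whb_axioms B) (f : X -> B) : { h : A -> B | whb_hom h /\ forall x, h (i x) = f x } :=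
  constructive_indefinite_description _ (proj1 (proj2 Hi B HB f)).

Definition free_tba_ext {X : Type} (A B : TBA) (i : X -> A) (Hi : is_free_tba i)
  (HB : tba_axioms B) (f : X -> B) : { h : A -> B | tba_hom h /\ forall x, h (i x) = f x } :=
  constructive_indefinite_description _ (proj1 (proj2 Hi B HB f)).

Section FreeDuality.
Variables (X : Type) (A : WHB) (iA : X -> A) (C : TBA) (iC : X -> C).
Hypothesis freeA : is_free_whb iA.
Hypothesis freeC : is_free_tba iC.
Let HA : whb_axioms A := proj1 freeA.
Let HC : tba_axioms C := proj1 freeC.

Definition theta : C -> T_alg HA :=
  proj1_sig (free_tba_ext freeC (T_alg_axioms HA) (fun x => Tsigma A (iA x))).

Lemma theta_hom : tba_hom theta.
Proof. exact (proj1 (proj2_sig (free_tba_ext freeC (T_alg_axioms HA) _))). Qed.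

Lemma theta_gen x : theta (iC x) = Tsigma A (iA x).
Proof. exact (proj2 (proj2_sig (free_tba_ext freeC (T_alg_axioms HA) _)) x). Qed.

Definition eta : A -> C := proj1_sig (free_whb_ext freeA (tense_whb_axioms HC) iC).

Lemma eta_hom : whb_hom (B := tense_whb C) eta.
Proof. exact (proj1 (proj2_sig (free_whb_ext freeA (tense_whb_axioms HC) _))). Qed.

Lemma eta_gen x : eta (iA x) = iC x.
Proof. exact (proj2 (proj2_sig (free_whb_ext freeA (tense_whb_axioms HC) _)) x). Qed.

Lemma theta_eta a : theta (eta a) = Tsigma A a.
Proof.
  refine (free_whb_unique (B := tense_whb (T_alg HA)) (h1 := fun a => theta (eta a))
            (h2 := Tsigma A) freeA (tense_whb_axioms (T_alg_axioms HA)) _ _ _ a).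
  - exact (whb_hom_comp eta_hom (tense_whb_hom theta_hom)).
  - exact (Tsigma_hom HA).
  - intro x. rewrite eta_gen. apply theta_gen.
Qed.

Definition psi (U : T_alg HA) : C :=
  proj1_sig (constructive_indefinite_description _ (represents_exists HC eta_hom (cset_box U))).

Lemma psi_represents U : represents eta (cset U) (psi U).
Proof. exact (proj2_sig (constructive_indefinite_description _ _)). Qed.

Lemma psi_of_represents (U : T_alg HA) V c : pseteq V (cset U) -> represents eta V c -> psi U = c.
Proof.
  intros VU Vc. exact (represents_unique HC eta_hom (pseteq_sym VU) (psi_represents U) Vc).
Qed.

Lemma psi_hom : tba_hom psi.
Proof.
  assert (rep := psi_represents).
  repeat split; intros.
  - apply psi_of_represents with (fun P => cset a P /\ cset b P); [intros P HP; simpl; tauto |].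
    apply (represents_meet HC); apply rep.
  - apply psi_of_represents with (fun P => cset a P \/ cset b P); [intros P HP; simpl; tauto |].
    apply (represents_join HC); apply rep.
  - apply psi_of_represents with (fun P => ~ cset a P); [intros P HP; simpl; tauto |].
    apply (represents_neg HC), rep.
  - apply psi_of_represents with (fun _ => False); [intros P HP; simpl; tauto |].
    apply represents_bot.
  - apply psi_of_represents with (fun _ => True); [intros P HP; simpl; tauto |].
    apply represents_top.
  - apply psi_of_represents with (G_op (cset a)); [intros P HP; simpl; tauto |].
    exact (represents_G HA HC eta_hom (cset_box a) (rep a)).
  - apply psi_of_represents with (H_op (cset a)); [intros P HP; simpl; tauto |].
    exact (represents_H HA HC eta_hom (cset_box a) (rep a)).
Qed.

Lemma psi_sigma a : psi (Tsigma A a) = eta a.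
Proof.
  apply psi_of_represents with (sigma a); [| apply represents_sigma].
  intros P HP. simpl. unfold sigma. tauto.
Qed.

Lemma psi_theta b : psi (theta b) = b.
Proof.
  refine (free_tba_unique (h1 := fun b => psi (theta b)) (h2 := fun b => b) freeC HC _ _ _ b).
  - exact (tba_hom_comp theta_hom psi_hom).
  - apply tba_hom_id.
  - intro x. rewrite theta_gen, psi_sigma. apply eta_gen.
Qed.

Lemma theta_represents b : represents eta (cset (theta b)) b.
Proof. rewrite <- (psi_theta b) at 2. apply psi_represents. Qed.

Lemma theta_of_represents U c :
  is_box_union U -> represents eta U c -> pseteq (cset (theta c)) U.
Proof.
  intros [L HL] Uc.
  rewrite (represents_unique HC eta_hom HL Uc (represents_boxes A HC eta L)).
  rewrite (join_boxes_hom A eta L theta_hom). intros P HP.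
  rewrite (cset_join_boxes _ L theta_eta HP). symmetry. apply HL, HP.
Qed.

Lemma theta_injective b c : pseteq (cset (theta b)) (cset (theta c)) -> b = c.
Proof.
  intro bc. rewrite <- (psi_theta b), <- (psi_theta c). f_equal. apply clopen_set_eq, bc.
Qed.

Lemma theta_surjective U : clopen U -> exists b, pseteq (cset (theta b)) U.
Proof.
  intro HU. apply (clopen_box_union HA) in HU.
  destruct (represents_exists HC eta_hom HU) as [b Ub].
  exists b. exact (theta_of_represents HU Ub).
Qed.

Lemma theta_iso : iso_onto_T (fun b => cset (theta b)).
Proof.
  destruct theta_hom as [tm [tj [tn [t0 [t1 [tG tH]]]]]].
  split; [intro b; exact (box_union_clopen HA (cset_box (theta b))) |].
  split; [intros b c; rewrite tm; intros P HP; simpl; tauto |].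
  split; [intros b c; rewrite tj; intros P HP; simpl; tauto |].
  split; [intro b; rewrite tn; intros P HP; simpl; tauto |].
  split; [rewrite t0; intros P HP; simpl; tauto |].
  split; [rewrite t1; intros P HP; simpl; tauto |].
  split; [intro b; rewrite tG; intros P HP; simpl; tauto |].
  split; [intro b; rewrite tH; intros P HP; simpl; tauto |].
  split; [exact theta_injective | exact theta_surjective].
Qed.

End FreeDuality.

Section Naturality.
Variables (X Y : Type) (A B : WHB) (iA : X -> A) (iB : Y -> B).
Variables (C D : TBA) (iC : X -> C) (iD : Y -> D).
Hypotheses (freeA : is_free_whb iA) (freeB : is_free_whb iB).
Hypotheses (freeC : is_free_tba iC) (freeD : is_free_tba iD).
Variables (l : X -> Y) (g : A -> B) (k : C -> D).
Hypotheses (Hg : whb_hom g) (gl : forall x, g (iA x) = iB (l x)).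
Hypotheses (Hk : tba_hom k) (kl : forall x, k (iC x) = iD (l x)).

Lemma eta_natural a : k (eta freeA freeC a) = eta freeB freeD (g a).
Proof.
  refine (free_whb_unique (B := tense_whb D) (h1 := fun a => k (eta freeA freeC a))
            (h2 := fun a => eta freeB freeD (g a)) freeA (tense_whb_axioms (proj1 freeD)) _ _ _ a).
  - exact (whb_hom_comp (eta_hom freeA freeC) (tense_whb_hom Hk)).
  - exact (whb_hom_comp Hg (eta_hom freeB freeD)).
  - intro x. rewrite gl, !eta_gen. apply kl.
Qed.

Lemma theta_natural b :
  pseteq (T_map g (cset (theta freeA freeC b))) (cset (theta freeB freeD (k b))).
Proof.
  apply pseteq_sym, theta_of_represents; [exact (box_union_T_map Hg (cset_box _)) |].
  intros V HV. unfold T_map.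
  replace (fun a => V (eta freeB freeD (g a))) with (fun a => V (k (eta freeA freeC a)))
    by (apply functional_extensionality; intro a; rewrite eta_natural; reflexivity).
  exact (theta_represents freeA freeC b (tba_hom_prime_comap Hk HV)).
Qed.

End Naturality.

Theorem theorem6p10
  (FW : Type -> WHB) (iW : forall X : Type, X -> FW X)
  (HW : forall X : Type, is_free_whb (iW X))
  (FT : Type -> TBA) (iT : forall X : Type, X -> FT X)
  (HT : forall X : Type, is_free_tba (iT X)) :
  exists theta : forall X : Type, FT X -> pset (FW X),
    (forall X : Type, iso_onto_T (theta X)) /\
    (forall (X Y : Type) (l : X -> Y) (g : FW X -> FW Y) (k : FT X -> FT Y),
       whb_hom g -> (forall x, g (iW X x) = iW Y (l x)) ->
       tba_hom k -> (forall x, k (iT X x) = iT Y (l x)) ->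
       forall b : FT X, pseteq (T_map g (theta X b)) (theta Y (k b))).
Proof.
  exists (fun X b => cset (theta (HW X) (HT X) b)). split.
  - intro X. apply theta_iso.
  - intros X Y l g k Hg gl Hk kl. exact (theta_natural (HW X) (HW Y) (HT X) (HT Y) l Hg gl Hk kl).
Qed.
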